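(* Let $R>0$, $\Omega=B_R(0)\subset\mathbb{R}^2$, $k>0$, and let $u_0\in C^0_{rad}(\overline\Omega)$ be nonnegative and such that $w(s,t):=\int_0^{\sqrt s}\rho u(\rho,t)\,d\rho$ satisfies $$\sup_{(s,t)\in(0,R^2)\times(0,T_{max})}\frac{w(s,t)}{s}<\infty.$$ Then there exists $C>0$ such that $z(s,t)\le Cs$ for all $s\in(0,R^2)$ and $t\in(0,T_{max})$, where $z(s,t):=k\int_0^{\sqrt s}\rho v(\rho,t)\,d\rho$.
   Context: $C^0_{rad}(\overline\Omega)$ denotes continuous functions on $\overline\Omega$ radially symmetric about $0$; radial functions are written as functions of $r=|x|$. $(u,v)$ with maximal existence time $T_{max}\in(0,\infty]$ is the solution associated with $u_0$: the unique pair of nonnegative functions $u\in C^0(\overline{\Omega}\times[0,T_{max}))\cap C^{2,1}(\overline{\Omega}\times(0,T_{max}))$, $v\in C^{2,0}(\overline{\Omega}\times(0,T_{max}))$ solving classically $u_t=\Delta u-\nabla\cdot(u\nabla v)$, $0=\Delta v-kv+u$ in $\Omega\times(0,T_{max})$, $\frac{\partial u}{\partial\nu}-u\frac{\partial v}{\partial\nu}=0$ and $v=0$ on $\partial\Omega$, $u(\cdot,0)=u_0$, with $T_{max}$ maximal such that $T_{max}<\infty$ implies $\limsup_{t\nearrow T_{max}}\|u(\cdot,t)\|_{L^\infty(\Omega)}=\infty$; it is radial for radial $u_0$. *)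

From Stdlib Require Import Reals.
From Coquelicot Require Import Coquelicot.
Open Scope R_scope.

(* Points of R^2 are written (a,b); space-time functions are u : R -> R -> R -> R,
   u a b t = u((a,b),t).  The domain Omega = B_Rad(0) in R^2. *)
Definition inB (Rad a b : R) : Prop := a ^ 2 + b ^ 2 < Rad ^ 2.
Definition clB (Rad a b : R) : Prop := a ^ 2 + b ^ 2 <= Rad ^ 2.
Definition bdB (Rad a b : R) : Prop := a ^ 2 + b ^ 2 = Rad ^ 2.

Definition cont3_on (S : R -> R -> R -> Prop) (f : R -> R -> R -> R) : Prop :=
  forall a b c, S a b c -> forall eps, 0 < eps -> exists d, 0 < d /\
    forall a' b' c', S a' b' c' -> Rabs (a' - a) < d -> Rabs (b' - b) < d ->
      Rabs (c' - c) < d -> Rabs (f a' b' c' - f a b c) < eps.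

Definition cont2_on (S : R -> R -> Prop) (f : R -> R -> R) : Prop :=
  forall a b, S a b -> forall eps, 0 < eps -> exists d, 0 < d /\
    forall a' b', S a' b' -> Rabs (a' - a) < d -> Rabs (b' - b) < d ->
      Rabs (f a' b' - f a b) < eps.

Definition ext_cont (Sin Scl : R -> R -> R -> Prop) (f : R -> R -> R -> R) : Prop :=
  exists g, cont3_on Scl g /\ forall a b c, Sin a b c -> g a b c = f a b c.

Definition d1 (f : R -> R -> R -> R) : R -> R -> R -> R :=
  fun a b t => Derive (fun y => f y b t) a.
Definition d2 (f : R -> R -> R -> R) : R -> R -> R -> R :=
  fun a b t => Derive (fun y => f a y t) b.
Definition dt (f : R -> R -> R -> R) : R -> R -> R -> R :=
  fun a b t => Derive (fun s => f a b s) t.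

Definition ex_d2x (f : R -> R -> R -> R) (a b t : R) : Prop :=
  ex_derive (fun y => f y b t) a /\ ex_derive (fun y => f a y t) b /\
  ex_derive (fun y => d1 f y b t) a /\ ex_derive (fun y => d1 f a y t) b /\
  ex_derive (fun y => d2 f y b t) a /\ ex_derive (fun y => d2 f a y t) b.

Definition lap (f : R -> R -> R -> R) : R -> R -> R -> R :=
  fun a b t => d1 (d1 f) a b t + d2 (d2 f) a b t.

Definition is_KS_solution (Rad k : R) (u0 : R -> R -> R) (u v : R -> R -> R -> R)
    (Tmax : Rbar) : Prop :=
  let Int := fun a b t => inB Rad a b /\ 0 < t /\ Rbar_lt (Finite t) Tmax in
  let Cl := fun a b t => clB Rad a b /\ 0 < t /\ Rbar_lt (Finite t) Tmax in
  let Cl0 := fun a b t => clB Rad a b /\ 0 <= t /\ Rbar_lt (Finite t) Tmax in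
  Rbar_lt (Finite 0) Tmax /\
  (* u in C^0(clOmega x [0,Tmax)), v continuous on clOmega x (0,Tmax) *)
  cont3_on Cl0 u /\ cont3_on Cl v /\
  (forall a b t, Cl0 a b t -> 0 <= u a b t) /\
  (forall a b t, Cl a b t -> 0 <= v a b t) /\
  (* u in C^{2,1}(clOmega x (0,Tmax)), v in C^{2,0}(clOmega x (0,Tmax)) *)
  (forall a b t, Int a b t ->
     ex_d2x u a b t /\ ex_derive (fun s => u a b s) t /\ ex_d2x v a b t) /\
  ext_cont Int Cl (dt u) /\
  ext_cont Int Cl (d1 (d1 u)) /\ ext_cont Int Cl (d2 (d1 u)) /\
  ext_cont Int Cl (d1 (d2 u)) /\ ext_cont Int Cl (d2 (d2 u)) /\
  ext_cont Int Cl (d1 (d1 v)) /\ ext_cont Int Cl (d2 (d1 v)) /\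
  ext_cont Int Cl (d1 (d2 v)) /\ ext_cont Int Cl (d2 (d2 v)) /\
  (forall a b t, Int a b t ->
     dt u a b t = lap u a b t
       - (d1 (fun a' b' t' => u a' b' t' * d1 v a' b' t') a b t
          + d2 (fun a' b' t' => u a' b' t' * d2 v a' b' t') a b t)) /\
  (forall a b t, Int a b t -> 0 = lap v a b t - k * v a b t + u a b t) /\
  (* boundary conditions, with the gradients taken as the continuous extensions
     to the closure; outer normal nu = x / Rad *)
  (exists gu1 gu2 gv1 gv2,
     cont3_on Cl gu1 /\ cont3_on Cl gu2 /\ cont3_on Cl gv1 /\ cont3_on Cl gv2 /\
     (forall a b t, Int a b t ->
        gu1 a b t = d1 u a b t /\ gu2 a b t = d2 u a b t /\
        gv1 a b t = d1 v a b t /\ gv2 a b t = d2 v a b t) /\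
     (forall a b t, bdB Rad a b -> 0 < t -> Rbar_lt (Finite t) Tmax ->
        (a * gu1 a b t + b * gu2 a b t) / Rad
          - u a b t * ((a * gv1 a b t + b * gv2 a b t) / Rad) = 0)) /\
  (forall a b t, bdB Rad a b -> 0 < t -> Rbar_lt (Finite t) Tmax -> v a b t = 0) /\
  (forall a b, clB Rad a b -> u a b 0 = u0 a b) /\
  (* maximality: Tmax < oo implies limsup_{t -> Tmax} ||u(.,t)||_oo = oo *)
  (match Tmax with
   | Finite T => forall M t0, t0 < T -> exists t a b,
       t0 < t /\ t < T /\ 0 <= t /\ clB Rad a b /\ M < u a b t
   | _ => True
   end).

Definition radial2 (Rad : R) (f : R -> R -> R) : Prop :=
  forall a b a' b', clB Rad a b -> a ^ 2 + b ^ 2 = a' ^ 2 + b' ^ 2 -> f a b = f a' b'.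

(* w(s,t) = int_0^{sqrt s} rho u(rho,t) drho, z(s,t) = k int_0^{sqrt s} rho v(rho,t) drho,
   with the radial profile read off along the positive first axis. *)
Definition wfun (u : R -> R -> R -> R) (s t : R) : R :=
  RInt (fun r => r * u r 0 t) 0 (sqrt s).
Definition zfun (k : R) (v : R -> R -> R -> R) (s t : R) : R :=
  k * RInt (fun r => r * v r 0 t) 0 (sqrt s).

From Stdlib Require Import Reals Lra.
From Coquelicot Require Import Coquelicot.
Open Scope R_scope.

(* The radial profile f(r) = v(r,t) solves f'' + f'/r - k f + u = 0 on (0,R), with f'(0) = 0
   by evenness and f(R) = 0.  Hence (r f')' = r (k f - u) >= - r u, and integrating from 0,
   r f'(r) >= - w(r^2,t) >= - M r^2.  Thus f + M r^2 / 2 is nondecreasing, and letting r -> R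
   gives f <= M R^2 / 2 on (0,R); integrating against r dr yields z(s,t) <= k M R^2 s / 4. *)

Lemma locally_of_Rabs (x d : R) (P : R -> Prop) :
  0 < d -> (forall y, Rabs (y - x) < d -> P y) -> locally x P.
Proof. intros Hd H. exists (mkposreal d Hd). exact H. Qed.

Lemma sqrt_lt_of_lt_pow2 (a b : R) : 0 <= a -> 0 < b -> a < b ^ 2 -> sqrt a < b.
Proof. intros. rewrite <- (sqrt_pow2 b) by lra. apply sqrt_lt_1_alt; lra. Qed.

Lemma continuous_id_mult (g : R -> R) (x : R) :
  continuous g x -> continuous (fun r => r * g r) x.
Proof. intros Hg. apply (continuous_mult (fun r => r) g); [apply continuous_id | exact Hg]. Qed.

Lemma ex_RInt_id_mult (g : R -> R) (a b : R) :
  a <= b -> (forall r, a <= r <= b -> continuous g r) -> ex_RInt (fun r => r * g r) a b.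
Proof.
  intros Hab Hg. apply (@ex_RInt_continuous R_CompleteNormedModule).
  intros r Hr. rewrite Rmin_left, Rmax_right in Hr by lra.
  apply continuous_id_mult, Hg; lra.
Qed.

Lemma RInt_id_mult_le (g : R -> R) (a B : R) :
  0 <= a -> (forall r, 0 <= r <= a -> continuous g r) -> (forall r, 0 < r < a -> g r <= B) ->
  RInt (fun r => r * g r) 0 a <= B * a ^ 2 / 2.
Proof.
  intros Ha Hg HB.
  assert (Hlin : is_RInt (fun r => r * B) 0 a (B * a ^ 2 / 2)).
  { replace (B * a ^ 2 / 2) with (minus (B * a ^ 2 / 2) (B * 0 ^ 2 / 2))
      by (unfold minus, plus, opp; simpl; field).
    apply (is_RInt_derive (fun r => B * r ^ 2 / 2)).
    - intros r _. auto_derive; [easy | field].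
    - intros r _. apply continuous_id_mult, continuous_const. }
  rewrite <- (is_RInt_unique _ _ _ _ Hlin).
  apply RInt_le; [lra | apply ex_RInt_id_mult; auto | exists (B * a ^ 2 / 2); exact Hlin |].
  intros r Hr. apply Rmult_le_compat_l; [lra | apply HB; lra].
Qed.

Lemma nondecreasing_of_derive_nonneg (g dg : R -> R) (a b : R) :
  (forall x, a < x < b -> is_derive g x (dg x)) -> (forall x, a < x < b -> 0 <= dg x) ->
  forall x y, a < x -> x <= y -> y < b -> g x <= g y.
Proof.
  intros Hd Hpos x y Hx Hxy Hy.
  destruct (MVT_gen g x y dg) as [c [Hc Hmvt]].
  - intros r Hr. rewrite Rmin_left, Rmax_right in Hr by lra. apply Hd; lra.
  - intros r Hr. rewrite Rmin_left, Rmax_right in Hr by lra.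
    apply continuity_pt_filterlim, (ex_derive_continuous (V := R_NormedModule)).
    exists (dg r). apply Hd; lra.
  - rewrite Rmin_left, Rmax_right in Hc by lra.
    assert (0 <= dg c) by (apply Hpos; lra). nra.
Qed.

Lemma Derive_even_0 (f : R -> R) (d : R) :
  0 < d -> (forall y, Rabs y < d -> f (- y) = f y) -> ex_derive f 0 -> Derive f 0 = 0.
Proof.
  intros Hd Heven Hf.
  assert (Hrefl : is_derive (fun y => f (- y)) 0 (- Derive f 0)).
  { auto_derive; replace (- 0) with 0 by ring; [exact Hf | ].
    change (fun x => f x) with f. ring. }
  apply (is_derive_ext_loc _ f) in Hrefl.
  - apply is_derive_unique in Hrefl. lra.
  - apply (locally_of_Rabs 0 d _ Hd). intros y Hy. apply Heven. now rewrite Rminus_0_r in Hy.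
Qed.

Section RadialDerivatives.

Variables (Rad x : R) (F : R -> R -> R).
Hypothesis x_in : 0 < x < Rad.
Hypothesis F_radial : radial2 Rad F.
Hypothesis F_axis_derivable : forall r, 0 < r < Rad -> ex_derive (fun z => F z 0) r.

Lemma radial_Derive_transverse (y : R) : Rabs y < Rad - x ->
  Derive (fun z => F x z) y
  = Derive (fun r => F r 0) (sqrt (x ^ 2 + y ^ 2)) * (y / sqrt (x ^ 2 + y ^ 2)).
Proof.
  intros Hy.
  rewrite (Derive_ext_loc _ (fun z => F (sqrt (x ^ 2 + z ^ 2)) 0)).
  - apply is_derive_unique.
    change (fun z => F (sqrt (x ^ 2 + z ^ 2)) 0)
      with (fun z => (fun r => F r 0) (sqrt (x ^ 2 + z ^ 2))).
    apply Rabs_lt_between in Hy.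
    assert (Hsqrt : 0 < sqrt (x ^ 2 + y ^ 2) < Rad).
    { split; [apply sqrt_lt_R0 | apply sqrt_lt_of_lt_pow2]; nra. }
    auto_derive; replace (x * (x * 1) + y * (y * 1)) with (x ^ 2 + y ^ 2) by ring.
    + split; [apply F_axis_derivable, Hsqrt | split; [nra | easy]].
    + field. lra.
  - apply (locally_of_Rabs y (Rad - x - Rabs y)); [lra |]. intros z Hz.
    pose proof (Rabs_triang_inv z y) as Hzy. assert (Hz' : Rabs z < Rad - x) by lra.
    apply Rabs_lt_between in Hz'.
    apply F_radial; [unfold clB; nra | rewrite pow2_sqrt by nra; ring].
Qed.

Lemma radial_Derive2_transverse :
  ex_derive (Derive (fun r => F r 0)) x ->
  Derive (fun y => Derive (fun z => F x z) y) 0 = Derive (fun r => F r 0) x / x.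
Proof.
  intros Hd2.
  rewrite (Derive_ext_loc _ (fun y => Derive (fun r => F r 0) (sqrt (x ^ 2 + y ^ 2))
                                      * (y / sqrt (x ^ 2 + y ^ 2)))).
  - apply is_derive_unique. auto_derive; replace (x * (x * 1) + 0 * (0 * 1)) with (x ^ 2) by ring;
      rewrite sqrt_pow2 by lra.
    + split; [exact Hd2 | repeat split; [nra | nra | lra]].
    + field. lra.
  - apply (locally_of_Rabs 0 (Rad - x)); [lra |]. intros y Hy.
    apply radial_Derive_transverse. now rewrite Rminus_0_r in Hy.
Qed.

End RadialDerivatives.

Section RadialProfile.

Variables (Rad k M : R) (f U : R -> R).
Hypothesis k_ge0 : 0 <= k.
Hypothesis M_ge0 : 0 <= M.
Hypothesis f_derivable : forall r, 0 <= r < Rad -> ex_derive f r.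
Hypothesis f'_derivable : forall r, 0 <= r < Rad -> ex_derive (Derive f) r.
Hypothesis f'_0 : Derive f 0 = 0.
Hypothesis f_equation : forall r, 0 < r < Rad ->
  0 = Derive (Derive f) r + Derive f r / r - k * f r + U r.
Hypothesis U_continuous : forall r, 0 <= r < Rad -> continuous U r.
Hypothesis f_ge0 : forall r, 0 < r < Rad -> 0 <= f r.
Hypothesis U_mass_le : forall r, 0 < r < Rad -> RInt (fun s => s * U s) 0 r <= M * r ^ 2.
Hypothesis f_vanishes_at_Rad : forall eps, 0 < eps ->
  exists d, 0 < d /\ forall r, Rad - d < r < Rad -> f r < eps.

Lemma flux_derivative (r : R) : 0 <= r < Rad ->
  is_derive (fun s => s * Derive f s) r (r * (k * f r - U r)).
Proof.
  intros Hr. auto_derive; [now apply f'_derivable |].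
  change (fun x => Derive f x) with (Derive f).
  destruct (Req_dec r 0) as [-> | Hr0]; [rewrite f'_0; ring |].
  pose proof (f_equation r ltac:(lra)) as Heq.
  (* add r times the equation, whose right-hand side vanishes *)
  replace (r * (k * f r - U r)) with
    (r * (k * f r - U r) + r * (Derive (Derive f) r + Derive f r / r - k * f r + U r))
    by (rewrite <- Heq; ring).
  field. exact Hr0.
Qed.

Lemma flux_lower_bound (x : R) : 0 < x < Rad -> - (M * x ^ 2) <= x * Derive f x.
Proof.
  intros Hx.
  assert (Hflux : is_RInt (fun s => s * (k * f s - U s)) 0 x (x * Derive f x)).
  { replace (x * Derive f x) with (minus (x * Derive f x) (0 * Derive f 0))
      by (unfold minus, plus, opp; simpl; ring).
    apply (is_RInt_derive (fun s => s * Derive f s)); intros r Hr;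
      rewrite Rmin_left, Rmax_right in Hr by lra.
    - apply flux_derivative; lra.
    - apply continuous_id_mult, (continuous_minus (fun s => k * f s) U).
      + apply (continuous_scal_r k f), (ex_derive_continuous (V := R_NormedModule)).
        apply f_derivable. lra.
      + apply U_continuous; lra. }
  assert (Hmass : ex_RInt (fun s => s * U s) 0 x).
  { apply ex_RInt_id_mult; [lra |]. intros r Hr. apply U_continuous; lra. }
  assert (Hle : RInt (fun s => - (s * U s)) 0 x <= RInt (fun s => s * (k * f s - U s)) 0 x).
  { apply RInt_le;
      [lra | exact (ex_RInt_opp _ _ _ Hmass) | exists (x * Derive f x); exact Hflux |].
    intros r Hr.
    assert (0 <= r * (k * f r)) by (apply Rmult_le_pos; [| apply Rmult_le_pos, f_ge0]; lra).
    lra. }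
  assert (Hopp : RInt (fun s => - (s * U s)) 0 x = - RInt (fun s => s * U s) 0 x)
    by exact (RInt_opp _ _ _ Hmass).
  rewrite Hopp, (is_RInt_unique _ _ _ _ Hflux) in Hle.
  pose proof (U_mass_le x Hx). lra.
Qed.

Lemma profile_plus_quadratic_nondecreasing (x y : R) : 0 < x -> x <= y -> y < Rad ->
  f x + M * x ^ 2 / 2 <= f y + M * y ^ 2 / 2.
Proof.
  intros Hx Hxy Hy.
  apply (nondecreasing_of_derive_nonneg (fun r => f r + M * r ^ 2 / 2)
           (fun r => Derive f r + M * r) 0 Rad); try assumption.
  - intros r Hr. auto_derive; [apply f_derivable; lra | change (fun x => f x) with f; field].
  - intros r Hr. pose proof (flux_lower_bound r Hr). nra.
Qed.

Lemma profile_le (x : R) : 0 < x < Rad -> f x <= M * Rad ^ 2 / 2.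
Proof.
  intros Hx. apply Rle_plus_epsilon. intros eps Heps.
  destruct (f_vanishes_at_Rad eps Heps) as [d [Hd Hnear]].
  set (y := Rmax x (Rad - d / 2)).
  assert (Hy : x <= y /\ Rad - d < y < Rad).
  { unfold y. split; [apply Rmax_l |]. split; [pose proof (Rmax_r x (Rad - d / 2)); lra |].
    apply Rmax_lub_lt; lra. }
  pose proof (profile_plus_quadratic_nondecreasing x y ltac:(lra) ltac:(lra) ltac:(lra)).
  pose proof (Hnear y (proj2 Hy)).
  assert (M * y ^ 2 <= M * Rad ^ 2) by (apply Rmult_le_compat_l; nra).
  assert (0 <= M * x ^ 2) by nra.
  lra.
Qed.

End RadialProfile.

Lemma cont3_on_continuous_1 (S : R -> R -> R -> Prop) (g : R -> R -> R -> R) (a b c d : R) :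
  cont3_on S g -> 0 < d -> (forall a', Rabs (a' - a) < d -> S a' b c) ->
  continuous (fun a' => g a' b c) a.
Proof.
  intros Hg Hd HS. apply continuity_pt_filterlim, continuity_pt_locally. intros eps.
  assert (H0 : forall z, Rabs (z - z) = 0)
    by (intros z; replace (z - z) with 0 by ring; apply Rabs_R0).
  destruct (Hg a b c (HS a ltac:(rewrite H0; lra)) eps (cond_pos eps)) as [d' [Hd' Hnear]].
  apply (locally_of_Rabs a (Rmin d d')); [apply Rmin_glb_lt; lra |]. intros a' Ha'.
  pose proof (Rmin_l d d'). pose proof (Rmin_r d d').
  apply Hnear; [apply HS; lra | lra | rewrite H0; lra | rewrite H0; lra].
Qed.

Lemma wfun_ratio_le_RInt (u : R -> R -> R -> R) (Rad M t : R) :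
  (forall s, 0 < s < Rad ^ 2 -> wfun u s t / s <= M) ->
  forall x, 0 < x < Rad -> RInt (fun r => r * u r 0 t) 0 x <= M * x ^ 2.
Proof.
  intros Hratio x Hx.
  pose proof (Hratio (x ^ 2) ltac:(split; nra)) as H. unfold wfun in H.
  rewrite sqrt_pow2 in H by lra.
  apply Rmult_le_compat_r with (r := x ^ 2) in H; [| nra].
  unfold Rdiv in H. rewrite Rmult_assoc, Rinv_l, Rmult_1_r in H by nra. exact H.
Qed.

Section KSTimeSlice.

Variables (Rad k : R) (u0 : R -> R -> R) (u v : R -> R -> R -> R) (Tmax : Rbar) (t : R).
Hypothesis Rad_gt0 : 0 < Rad.
Hypothesis k_ge0 : 0 <= k.
Hypothesis KS : is_KS_solution Rad k u0 u v Tmax.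
Hypothesis t_gt0 : 0 < t.
Hypothesis t_lt_Tmax : Rbar_lt (Finite t) Tmax.
Hypothesis v_radial : radial2 Rad (fun a b => v a b t).

Lemma KS_v_axis_derivable (r : R) : -Rad < r < Rad ->
  ex_derive (fun y => v y 0 t) r /\ ex_derive (Derive (fun y => v y 0 t)) r.
Proof.
  intros Hr. destruct KS as (_ & _ & _ & _ & _ & Hreg & _).
  destruct (Hreg r 0 t) as (_ & _ & Hd1 & _ & Hd11 & _);
    [unfold inB; repeat split; nra || easy |].
  split; assumption.
Qed.

Lemma KS_v_axis_equation (r : R) : 0 < r < Rad ->
  0 = Derive (Derive (fun y => v y 0 t)) r + Derive (fun y => v y 0 t) r / r
      - k * v r 0 t + u r 0 t.
Proof.
  intros Hr. destruct KS as (_ & _ & _ & _ & _ & _ & _ & _ & _ & _ & _ & _ & _ & _ & _ & _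
                            & Heqv & _).
  pose proof (radial_Derive2_transverse Rad r (fun a b => v a b t) Hr v_radial) as Hd22.
  cbv beta in Hd22.
  rewrite <- Hd22.
  - apply (Heqv r 0 t). unfold inB. repeat split; nra || easy.
  - intros y Hy. apply KS_v_axis_derivable. lra.
  - apply KS_v_axis_derivable. lra.
Qed.

Lemma KS_u_axis_continuous (r : R) : -Rad < r < Rad -> continuous (fun y => u y 0 t) r.
Proof.
  intros Hr. destruct KS as (_ & Hcu & _).
  apply (cont3_on_continuous_1 _ u r 0 t (Rad - Rabs r) Hcu).
  - apply Rabs_lt_between in Hr. lra.
  - intros a Ha. pose proof (Rabs_triang_inv a r). assert (Hab : Rabs a < Rad) by lra.
    apply Rabs_lt_between in Hab. unfold clB. repeat split; nra || lra || easy.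
Qed.

Lemma KS_v_axis_vanishes_at_Rad (eps : R) : 0 < eps ->
  exists d, 0 < d /\ forall r, Rad - d < r < Rad -> v r 0 t < eps.
Proof.
  intros Heps.
  destruct KS as (_ & _ & Hcv & _ & _ & _ & _ & _ & _ & _ & _ & _ & _ & _ & _ & _ & _ & _
                  & Hbdv & _).
  assert (Hcl : clB Rad Rad 0 /\ 0 < t /\ Rbar_lt t Tmax)
    by (unfold clB; repeat split; nra || easy).
  destruct (Hcv Rad 0 t Hcl eps Heps) as [d [Hd Hnear]].
  rewrite (Hbdv Rad 0 t) in Hnear by (unfold bdB; ring || easy).
  exists (Rmin d Rad). split; [apply Rmin_glb_lt; lra |]. intros r Hr.
  pose proof (Rmin_l d Rad). pose proof (Rmin_r d Rad).
  assert (Hclose : Rabs (v r 0 t - 0) < eps).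
  { apply Hnear; [unfold clB; repeat split; nra || easy | apply Rabs_lt_between; lra | |];
      replace (_ - _) with 0 by ring; rewrite Rabs_R0; lra. }
  apply Rabs_lt_between in Hclose. lra.
Qed.

Lemma KS_v_axis_le (M : R) : 0 <= M ->
  (forall x, 0 < x < Rad -> RInt (fun r => r * u r 0 t) 0 x <= M * x ^ 2) ->
  forall x, 0 < x < Rad -> v x 0 t <= M * Rad ^ 2 / 2.
Proof.
  intros HM Hmass.
  apply (profile_le Rad k M _ (fun r => u r 0 t)); try assumption.
  - intros r Hr. apply KS_v_axis_derivable. lra.
  - intros r Hr. apply KS_v_axis_derivable. lra.
  - apply (Derive_even_0 _ Rad Rad_gt0).
    + intros y Hy. apply Rabs_lt_between in Hy. apply v_radial; [unfold clB; nra | ring].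
    + apply KS_v_axis_derivable. lra.
  - exact KS_v_axis_equation.
  - intros r Hr. apply KS_u_axis_continuous. lra.
  - intros r Hr. destruct KS as (_ & _ & _ & _ & Hvpos & _).
    apply Hvpos. unfold clB. repeat split; nra || easy.
  - exact KS_v_axis_vanishes_at_Rad.
Qed.

End KSTimeSlice.

Theorem lemma4p6 (Rad k : R) (u0 : R -> R -> R) (u v : R -> R -> R -> R) (Tmax : Rbar) :
  0 < Rad -> 0 < k ->
  cont2_on (clB Rad) u0 -> (forall a b, clB Rad a b -> 0 <= u0 a b) -> radial2 Rad u0 ->
  is_KS_solution Rad k u0 u v Tmax ->
  (forall t, 0 <= t -> Rbar_lt (Finite t) Tmax -> radial2 Rad (fun a b => u a b t)) ->
  (forall t, 0 < t -> Rbar_lt (Finite t) Tmax -> radial2 Rad (fun a b => v a b t)) ->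
  (exists M, forall s t, 0 < s < Rad ^ 2 -> 0 < t -> Rbar_lt (Finite t) Tmax ->
     wfun u s t / s <= M) ->
  exists C, 0 < C /\ forall s t, 0 < s < Rad ^ 2 -> 0 < t -> Rbar_lt (Finite t) Tmax ->
     zfun k v s t <= C * s.
Proof.
  intros HR Hk _ _ _ HKS _ Hv_radial [M Hratio].
  set (M' := Rmax M 0).
  assert (HM' : 0 <= M' /\ M <= M') by (split; [apply Rmax_r | apply Rmax_l]).
  set (B := M' * Rad ^ 2 / 2).
  assert (HB : 0 <= B) by (unfold B; nra).
  exists (k * B / 2 + 1). split; [nra |].
  intros s t Hs Ht HtT.
  assert (Hsqrt : 0 < sqrt s < Rad).
  { split; [apply sqrt_lt_R0 | apply sqrt_lt_of_lt_pow2]; lra. }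
  assert (Hv_le : forall r, 0 < r < sqrt s -> v r 0 t <= B).
  { intros r Hr.
    apply (KS_v_axis_le Rad k u0 u v Tmax t HR (Rlt_le _ _ Hk) HKS Ht HtT (Hv_radial t Ht HtT));
      [apply HM' | | lra].
    apply wfun_ratio_le_RInt. intros s' Hs'. pose proof (Hratio s' t Hs' Ht HtT). lra. }
  assert (Hint : RInt (fun r => r * v r 0 t) 0 (sqrt s) <= B * sqrt s ^ 2 / 2).
  { apply RInt_id_mult_le; [lra | | exact Hv_le].
    intros r Hr. apply (ex_derive_continuous (V := R_NormedModule)).
    apply (KS_v_axis_derivable Rad k u0 u v Tmax t HKS Ht HtT). lra. }
  rewrite pow2_sqrt in Hint by lra.
  unfold zfun. nra.
Qed.
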